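(* Let $a,x\in \mathcal{A}$, $\lambda,\mu\in \mathbb{C}^*$, $ax=\lambda xa$ and $a^*x=\mu xa^*$. If $a\in \mathcal{A}^{\mathrm{gcEP}}$, then $a^{\mathrm{gcEP}}x=\lambda^{-1}xa^{\mathrm{gcEP}}$.
   Context: $\mathcal{A}$ is a complex Banach *-algebra with identity, and $\mathbb{C}^*$ is the set of nonzero complex numbers. An element $a$ has a generalized core-EP inverse if there is $y\in\mathcal{A}$ with $y=ay^2$, $(ay)^*=ay$, $\lim_{n\to\infty}\|a^n-ya^{n+1}\|^{1/n}=0$; such $y$ is unique, denoted $a^{\mathrm{gcEP}}$, and $\mathcal{A}^{\mathrm{gcEP}}$ is the set of such $a$. *)

From HB Require Import structures.
From mathcomp Require Import all_boot all_order all_algebra.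
From mathcomp Require Import all_classical all_reals all_analysis.
From mathcomp Require Import complex.
Set Implicit Arguments. Unset Strict Implicit. Unset Printing Implicit Defensive.
Import Order.TTheory GRing.Theory Num.Theory.
Import numFieldNormedType.Exports.
Local Open Scope ring_scope.
Local Open Scope complex_scope.
Local Open Scope classical_set_scope.

(* A complex Banach *-algebra with identity: a (unital, associative)
   algebra A over C = R[i] (R : realType, so R[i] is the complex field),
   with the homogeneity N(c x) = abs(c) N(x) stated in R[i] via the embedding %:C,
   a complete submultiplicative algebra norm N : A -> R with N 1 = 1,
   and an involution star (conjugate-linear, anti-multiplicative, involutive). *)
Definition is_banach_star_algebra {R : realType} {A : algType R[i]}
    (N : A -> R) (star : A -> A) : Prop :=
  [/\
      [/\ (forall x : A, 0 <= N x),
      (forall x : A, N x = 0 -> x = 0),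
      (forall x y : A, N (x + y) <= N x + N y),
      (forall (c : R[i]) (x : A), (N (c *: x))%:C = `|c| * (N x)%:C) &
      (forall x y : A, N (x * y) <= N x * N y)],
      N 1 = 1,
      (forall u : nat -> A,
          (forall e : R, 0 < e -> exists M : nat, forall m n : nat,
              (M <= m)%N -> (M <= n)%N -> N (u m - u n) < e) ->
          exists l : A, forall e : R, 0 < e -> exists M : nat, forall n : nat,
              (M <= n)%N -> N (u n - l) < e) &
      [/\ (forall x y : A, star (x + y) = star x + star y),
          (forall (c : R[i]) (x : A), star (c *: x) = (c^*) *: star x),
          (forall x y : A, star (x * y) = star y * star x) &
          (forall x : A, star (star x) = x)]].

Definition is_gcEP_inverse {R : realType} {A : algType R[i]}
    (N : A -> R) (star : A -> A) (a y : A) : Prop :=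
  [/\ y = a * y ^+ 2,
      star (a * y) = a * y &
      (fun n : nat => powR (N (a ^+ n - y * a ^+ n.+1)) (n%:R^-1)) @ \oo --> (0 : R)].

Definition has_gcEP {R : realType} {A : algType R[i]}
    (N : A -> R) (star : A -> A) (a : A) : Prop :=
  exists y : A, is_gcEP_inverse N star a y.

From HB Require Import structures.
From mathcomp Require Import all_boot all_order all_algebra.
From mathcomp Require Import all_classical all_reals all_analysis.
From mathcomp Require Import complex ring lra.
Set Implicit Arguments. Unset Strict Implicit. Unset Printing Implicit Defensive.
Import Order.TTheory GRing.Theory Num.Theory.
Import numFieldNormedType.Exports.
Local Open Scope ring_scope.
Local Open Scope classical_set_scope.
Local Open Scope complex_scope.

(* Let p = a y.  If z = a^n w_n for all n > 0 with ||w_n|| at most geometric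
   in n, then z - y a z = (a^n - y a^(n+1)) w_n and, since (1 - p) y = 0,
   z - p z = (1 - p)(a^n - y a^(n+1)) w_n; both vanish because
   ||a^n - y a^(n+1)||^(1/n) -> 0 beats any geometric growth.  Hence y a z = z
   and p z = z.  From a x = lam x a we get x p = x a^n y^n = a^n (lam^-n x y^n),
   so p x p = x p; the same argument for x^*, which satisfies
   x^* a = mu^* a x^*, gives after taking adjoints (p^* = p) p x p = p x.  Thus p commutes with x, and
   with y a y = y, y a p = p and p y = y:
   y x = y p x = y x p = lam^-1 y a x y = lam^-1 y a p x y = lam^-1 x y. *)

Lemma root_null_geometric_cvg0 (R : realType) (f : nat -> R) (c : R) :
  (forall n, 0 <= f n) ->
  (fun n : nat => powR (f n) n%:R^-1) @ \oo --> 0 ->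
  (fun n : nat => c ^+ n * f n) @ \oo --> 0.
Proof.
move=> f_ge0 root_f.
pose r : R := (2 * (`|c| + 1))^-1.
have r_gt0 : 0 < r by rewrite invr_gt0 mulr_gt0 // ltr_wpDl.
have cr_lt1 : `| `|c| * r | < 1.
  rewrite ger0_norm ?mulr_ge0 ?(ltW r_gt0) // ltr_pdivrMr ?mulr_gt0 ?ltr_wpDl //.
  by rewrite mul1r; have := normr_ge0 c; lra.
have root_le : \forall n \near \oo, `|powR (f n) n%:R^-1| <= r.
  exact: cvgr0_norm_le.
apply: norm_cvg0.
apply: (squeeze_cvgr _ (cvg_cst (0 : R)) (cvg_expr cr_lt1)); near=> n.
rewrite normr_ge0 /= normrM normrX exprMn ler_wpM2l ?exprn_ge0 //.
have n_gt0 : (0 < n)%N by near: n; exact: nbhs_infty_gt.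
have -> : f n = powR (f n) n%:R^-1 ^+ n.
  by rewrite -powR_mulrn ?powR_ge0 // -powRrM mulVf ?powRr1 // pnatr_eq0 -lt0n.
rewrite ger0_norm ?exprn_ge0 ?powR_ge0 //.
apply: lerXn2r; rewrite ?nnegrE ?powR_ge0 ?(ltW r_gt0) //.
rewrite -[powR _ _]ger0_norm ?powR_ge0 //; near: n; exact: root_le.
Unshelve. all: by end_near.
Qed.

Lemma exp_skew_comm (K : comNzRingType) (A : algType K) (a x : A) (c : K) n :
  x * a = c *: (a * x) -> x * a ^+ n = c ^+ n *: (a ^+ n * x).
Proof.
move=> xa; elim: n => [|n IHn]; first by rewrite !expr0 scale1r mulr1 mul1r.
rewrite [a ^+ n.+1]exprSr mulrA IHn -scalerAl -[_ * x * a]mulrA xa -scalerAr scalerA.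
by rewrite mulrA -!exprSr.
Qed.

Section NormedAlgebra.
Variables (R : realType) (A : algType R[i]) (N : A -> R).
Hypotheses (N_ge0 : forall x : A, 0 <= N x) (N_eq0 : forall x : A, N x = 0 -> x = 0)
  (NZ : forall (c : R[i]) (x : A), (N (c *: x))%:C = `|c| * (N x)%:C)
  (NM : forall x y : A, N (x * y) <= N x * N y) (N1 : N 1 = 1).

Lemma normZ c x : N (c *: x) = Normc.normc c * N x.
Proof.
have : (N (c *: x))%:C = (Normc.normc c * N x)%:C.
  by rewrite NZ rmorphM; case: c => u v; rewrite normc_def.
by move/(congr1 (@complex.Re _)).
Qed.

Lemma normZX c n x : N (c ^+ n *: x) = Normc.normc c ^+ n * N x.
Proof.
elim: n => [|n IHn]; first by rewrite !expr0 scale1r mul1r.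
by rewrite exprS -scalerA normZ IHn mulrA -exprS.
Qed.

Lemma normX_le x n : N (x ^+ n) <= N x ^+ n.
Proof.
elim: n => [|n IHn]; first by rewrite !expr0 N1.
by rewrite !exprS (le_trans (NM _ _)) // ler_wpM2l.
Qed.

Lemma eq0_root_null_bound (z : A) (f : nat -> R) (K c : R) :
  (forall n, 0 <= f n) ->
  (fun n : nat => powR (f n) n%:R^-1) @ \oo --> 0 ->
  (forall n, (0 < n)%N -> N z <= K * (c ^+ n * f n)) -> z = 0.
Proof.
move=> f_ge0 root_f z_le; apply/N_eq0/le_anti; rewrite N_ge0 andbT.
have Kcf : (fun n => K * (c ^+ n * f n)) @ \oo --> K * 0.
  by apply: cvgM; [exact: cvg_cst | exact: root_null_geometric_cvg0].
rewrite -(mulr0 K); apply: (ler_cvg_to (cvg_cst (N z)) Kcf).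
by near=> n; apply: z_le; near: n; exact: nbhs_infty_gt.
Unshelve. all: by end_near.
Qed.

Variables (a y : A).
Hypotheses (y_eq : y = a * y ^+ 2)
  (root_res : (fun n : nat => powR (N (a ^+ n - y * a ^+ n.+1)) (n%:R^-1)) @ \oo --> 0).

Lemma gcEP_mul_expSS k : a * y ^+ k.+2 = y ^+ k.+1.
Proof. by rewrite !exprS !mulrA -[a * y * y]mulrA -expr2 -y_eq. Qed.

Lemma gcEP_expE n : y = a ^+ n * y ^+ n.+1.
Proof.
elim: n => [|n IHn]; first by rewrite expr0 mul1r expr1.
by rewrite exprSr -mulrA gcEP_mul_expSS.
Qed.

Lemma gcEP_projE n : (0 < n)%N -> a * y = a ^+ n * y ^+ n.
Proof. by case: n => // n _; rewrite {1}(gcEP_expE n) mulrA -exprS. Qed.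

Lemma gcEP_proj_mul : a * y * y = y.
Proof. by rewrite -mulrA -expr2 -y_eq. Qed.

Lemma gcEP_compl_proj_mul : (1 - a * y) * y = 0.
Proof. by rewrite mulrBl mul1r gcEP_proj_mul subrr. Qed.

Lemma gcEP_residual_eq0 (u z : A) (w : nat -> A) (K c : R) :
  (forall n, N (w n) <= K * c ^+ n) ->
  (forall n, (0 < n)%N -> z = u * (a ^+ n - y * a ^+ n.+1) * w n) -> z = 0.
Proof.
move=> w_le z_eq; apply: (@eq0_root_null_bound _ _ (N u * K) c _ root_res) => // n n_gt0.
set r := a ^+ n - y * a ^+ n.+1.
rewrite (z_eq n n_gt0) (le_trans (NM _ _)) // (le_trans (ler_wpM2r (N_ge0 _) (NM _ _))) //.
rewrite [leRHS](_ : _ = N u * N r * (K * c ^+ n)); last by ring.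
by rewrite ler_wpM2l ?mulr_ge0.
Qed.

Lemma gcEP_range_fixl (z : A) (w : nat -> A) (K c : R) :
  (forall n, N (w n) <= K * c ^+ n) ->
  (forall n, (0 < n)%N -> z = a ^+ n * w n) -> y * a * z = z.
Proof.
move=> w_le z_eq; apply/eqP; rewrite eq_sym -subr_eq0; apply/eqP.
apply: (gcEP_residual_eq0 (u := 1) w_le) => n n_gt0.
by rewrite mul1r mulrBl exprS -!mulrA -(z_eq n n_gt0).
Qed.

Lemma gcEP_range_fixr (z : A) (w : nat -> A) (K c : R) :
  (forall n, N (w n) <= K * c ^+ n) ->
  (forall n, (0 < n)%N -> z = a ^+ n * w n) -> a * y * z = z.
Proof.
move=> w_le z_eq; apply/eqP; rewrite eq_sym -subr_eq0; apply/eqP.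
apply: (gcEP_residual_eq0 (u := 1 - a * y) w_le) => n n_gt0.
rewrite mulrBr [_ * (y * _)]mulrA gcEP_compl_proj_mul mul0r subr0.
by rewrite -[_ * a ^+ n * _]mulrA -(z_eq n n_gt0) mulrBl mul1r.
Qed.

Lemma gcEP_outer : y * a * y = y.
Proof.
apply: (@gcEP_range_fixl _ (fun n => y ^+ n.+1) (N y) (N y)) => [n|n _].
  by rewrite -exprS normX_le.
exact: gcEP_expE.
Qed.

Lemma gcEP_fix_proj : y * a * (a * y) = a * y.
Proof.
apply: (@gcEP_range_fixl _ (GRing.exp y) 1 (N y)) => [n|]; last exact: gcEP_projE.
by rewrite mul1r normX_le.
Qed.

Lemma gcEP_proj_skew_comm (x : A) (c : R[i]) :
  x * a = c *: (a * x) -> a * y * (x * (a * y)) = x * (a * y).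
Proof.
move=> xa.
apply: (@gcEP_range_fixr _ (fun n => c ^+ n *: (x * y ^+ n)) (N x) (Normc.normc c * N y)).
  move=> n; rewrite normZX exprMn mulrCA ler_wpM2l ?exprn_ge0 //.
    by case: c {xa} => ? ?; exact: sqrtr_ge0.
  by rewrite (le_trans (NM _ _)) // ler_wpM2l ?normX_le.
move=> n n_gt0.
by rewrite (gcEP_projE n_gt0) mulrA (exp_skew_comm _ xa) -scalerAl -mulrA scalerAr.
Qed.

Lemma gcEP_skew_comm (x : A) (c : R[i]) :
  x * a = c *: (a * x) -> a * y * x = x * (a * y) -> y * x = c *: (x * y).
Proof.
move=> xa px_xp.
have xy_eq : x * y = a * y * (x * y) by rewrite mulrA px_xp -mulrA gcEP_proj_mul.
have yaxy : y * a * x * y = x * y.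
  by rewrite -mulrA xy_eq !mulrA -(mulrA _ a) gcEP_fix_proj -mulrA -xy_eq.
rewrite -{1}gcEP_outer -[y * a * y]mulrA -mulrA px_xp !mulrA -[y * x * a]mulrA xa.
by rewrite -scalerAr -scalerAl !mulrA yaxy.
Qed.
End NormedAlgebra.

Theorem lemma3p2 (R : realType) (A : algType R[i]) (N : A -> R) (star : A -> A)
    (a x : A) (lam mu : R[i]) :
  is_banach_star_algebra N star ->
  lam != 0 -> mu != 0 ->
  a * x = lam *: (x * a) ->
  star a * x = mu *: (x * star a) ->
  has_gcEP N star a ->
  forall y : A, is_gcEP_inverse N star a y ->
  y * x = lam^-1 *: (x * y).
Proof.
case=> [[N_ge0 N_eq0 _ NZ NM] N1 _ [_ starZ starM starK]] lam_neq0 _ ax_comm.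
move=> astar_comm _ y [y_eq star_proj root_res].
have xa : x * a = lam^-1 *: (a * x) by rewrite ax_comm scalerA mulVf // scale1r.
have xstar_a : star x * a = mu^* *: (a * star x).
  by rewrite -{1}[a]starK -starM astar_comm starZ starM starK.
have proj_skew := gcEP_proj_skew_comm N_ge0 N_eq0 NZ NM N1 y_eq root_res.
set p := a * y in star_proj proj_skew *.
have pxp_xp : p * (x * p) = x * p := proj_skew _ _ xa.
have pxp_px : p * (x * p) = p * x.
  have := congr1 star (proj_skew _ _ xstar_a).
  by rewrite starM star_proj starM star_proj starK -mulrA.
apply: (gcEP_skew_comm N_ge0 N_eq0 NM N1 y_eq root_res xa).
by rewrite -pxp_px pxp_xp.
Qed.
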